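(* Let $a\in\mathrm{Ext}_{\mathcal A(1)}(\mathbb M_2,\mathbb M_2)$ be the class detected in the $\rho$-Bockstein spectral sequence by $\tau^2v_0$. Then $a\,\eta=\rho\,\eta_0^2$ in $\mathrm{Ext}_{\mathcal A(1)}(\mathbb M_2,\mathbb M_2)$.
   Context: $\mathbb M_2=\mathbb F_2[\tau,\rho]$; $\mathcal A(1)=\big(\mathbb M_2,\mathbb M_2[\xi_1,\tau_0,\tau_1]/(\xi_1^2,\ \tau_0^2-\rho\tau_1-\rho\tau_0\xi_1-\tau\xi_1,\ \tau_1^2)\big)$ with $\eta_R(\tau)=\tau+\rho\tau_0$, $\eta_R(\rho)=\rho$. The $\rho$-Bockstein spectral sequence has $E_1=\mathbb F_2[\rho,\tau,v_0,\eta,x,v_1^4]/(v_0\eta,\tau\eta^3,\eta x,x^2-v_0^2v_1^4)$, $v_0=[\tau_0]$, $\eta=[\xi_1]$, $d_1(\tau)=\rho v_0$, $d_2(\tau^2)=\rho^2\eta_0$, where $\eta_0=[\tau_0^2]$ is the permanent cycle detected by $\tau\eta$. The element $\tau^2v_0$ is a permanent cycle (cobar representative $\tau^2\tau_0+\tau\rho\tau_0^2+\rho^2\tau_0^3$). *)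

(* Explicit model of the cobar complex of the Hopf algebroid
   A(1) = (M2, Gamma) in cobar degrees 1 -> 2, with M2 = F2[rho,tau].
   Multivariate polynomials are modelled by nested {poly _} over 'F_2. *)
From HB Require Import structures.
From mathcomp Require Import all_boot all_order all_algebra.
Set Implicit Arguments. Unset Strict Implicit. Unset Printing Implicit Defensive.
Import GRing.Theory.
Local Open Scope ring_scope.

Definition K := 'F_2.
HB.instance Definition _ := GRing.Field.on K.
(* P1 = F2[rho], P2 = P1[tau], P3 = P2[xi1], P4 = P3[tau0], P5 = P4[tau1]:
   P5 is the free polynomial ring of which Gamma is a quotient. *)
Definition P1 := {poly K}.
HB.instance Definition _ := GRing.IntegralDomain.on P1.
Definition P2 := {poly P1}.
HB.instance Definition _ := GRing.IntegralDomain.on P2.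
Definition P3 := {poly P2}.
HB.instance Definition _ := GRing.IntegralDomain.on P3.
Definition P4 := {poly P3}.
HB.instance Definition _ := GRing.IntegralDomain.on P4.
Definition P5 := {poly P4}.
HB.instance Definition _ := GRing.IntegralDomain.on P5.
(* P6 = P5[xi1'], P7 = P6[tau0'], P8 = P7[tau1']: the free polynomial ring
   of which Gamma (x)_{M2} Gamma is a quotient; the unprimed generators
   are those of the left tensor factor, the primed ones those of the right. *)
Definition P6 := {poly P5}.
HB.instance Definition _ := GRing.IntegralDomain.on P6.
Definition P7 := {poly P6}.
HB.instance Definition _ := GRing.IntegralDomain.on P7.
Definition P8 := {poly P7}.
HB.instance Definition _ := GRing.IntegralDomain.on P8.

Definition rho5  : P5 := polyC (polyC (polyC (polyC ('X : P1)))).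
Definition tau5  : P5 := polyC (polyC (polyC ('X : P2))).
Definition xi5   : P5 := polyC (polyC ('X : P3)).
Definition tau05 : P5 := polyC ('X : P4).
Definition tau15 : P5 := ('X : P5).

Definition lift58 (p : P5) : P8 := polyC (polyC (polyC p)).
Definition rho8   : P8 := lift58 rho5.
Definition tau8   : P8 := lift58 tau5.
Definition xi8    : P8 := lift58 xi5.
Definition tau08  : P8 := lift58 tau05.
Definition tau18  : P8 := lift58 tau15.
Definition xi8'   : P8 := polyC (polyC ('X : P6)).
Definition tau08' : P8 := polyC ('X : P7).
Definition tau18' : P8 := ('X : P8).

Definition cst8 (k : K) : P8 :=
  polyC (polyC (polyC (polyC (polyC (polyC (polyC (polyC k))))))).

(* the ring map P5 -> P8 sending rho,tau,xi1,tau0,tau1 to x1,...,x5 *)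
Definition ev5 (x1 x2 x3 x4 x5 : P8) (p : P5) : P8 :=
  (map_poly (fun p4 : P4 =>
    (map_poly (fun p3 : P3 =>
      (map_poly (fun p2 : P2 =>
        (map_poly (fun p1 : P1 => (map_poly cst8 p1).[x1]) p2).[x2])
      p3).[x3]) p4).[x4]) p).[x5].

Definition in_ideal (R : comNzRingType) (gens : seq R) (x : R) : Prop :=
  exists qs : seq R, size qs = size gens /\
    x = \sum_(i < size gens) qs`_i * gens`_i.

(* Gamma (x)_{M2} Gamma = P8 / (xi1^2, tau1^2, tau0^2 - rho tau1 - rho tau0 xi1 - tau xi1,
   and the same relations for the right factor, where tau acts on the right
   factor through eta_R(tau) = tau + rho tau0). *)
Definition GG_rels : seq P8 :=
  [:: xi8 ^+ 2; tau18 ^+ 2;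
      tau08 ^+ 2 - rho8 * tau18 - rho8 * tau08 * xi8 - tau8 * xi8;
      xi8' ^+ 2; tau18' ^+ 2;
      tau08' ^+ 2 - rho8 * tau18' - rho8 * tau08' * xi8'
        - (tau8 + rho8 * tau08) * xi8'].

Definition eqGG (x y : P8) : Prop := in_ideal GG_rels (x - y).

Definition iotaL : P5 -> P8 := ev5 rho8 tau8 xi8 tau08 tau18.
(* gamma |-> 1 (x) gamma  (M2 acts through eta_R: tau |-> tau + rho tau0) *)
Definition iotaR : P5 -> P8 := ev5 rho8 (tau8 + rho8 * tau08) xi8' tau08' tau18'.
Definition Delta : P5 -> P8 :=
  ev5 rho8 tau8 (xi8 + xi8') (tau08 + tau08') (tau18 + xi8 * tau08' + tau18').

(* cobar differential C^1 = Gamma -> C^2 = Gamma (x)_{M2} Gamma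
   (signs are irrelevant in characteristic 2) *)
Definition cobar_d1 (c : P5) : P8 := iotaR c + Delta c + iotaL c.

Definition cobar_mul11 (x y : P5) : P8 := iotaL x * iotaR y.

Definition a_rep : P5 :=
  tau5 ^+ 2 * tau05 + tau5 * rho5 * tau05 ^+ 2 + rho5 ^+ 2 * tau05 ^+ 3.
Definition eta_rep : P5 := xi5.
Definition eta0_rep : P5 := tau05 ^+ 2.

(* For c = tau^2 tau1 + tau^2 xi1 tau0, the difference
   d(c) - ([a|xi1] - rho [tau0^2|tau0^2]) is an explicit Gamma-linear
   combination of the relations tau0^2 = rho tau1 + rho tau0 xi1 + tau xi1 in
   the left and in the right tensor factor.  Evaluating the two units and the
   coproduct on the generators turns this into a polynomial identity in eight
   variables over a ring of characteristic 2. *)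
From HB Require Import structures.
From Stdlib Require Import Ring.
From Pilot Require Import Defs.
From mathcomp Require Import all_boot all_order all_algebra.
Set Implicit Arguments. Unset Strict Implicit. Unset Printing Implicit Defensive.
Import GRing.Theory.
Local Open Scope ring_scope.

Section Char2Ring.
Variables (R : comNzRingType) (char2 : 2%:R = 0 :> R).

Lemma char2_oppr (x : R) : - x = x.
Proof. by apply/eqP; rewrite -subr_eq0 -opprD oppr_eq0 -mulr2n -mulr_natr char2 mulr0. Qed.

(* Stdlib's [ring] matches carrier and operations syntactically, whereas
   MathComp terms reach them through varying coercion paths; these constants
   give every occurrence a single syntactic form. *)
Definition char2_add (x y : R) : R := x + y.
Definition char2_mul (x y : R) : R := x * y.
Definition char2_opp (x : R) : R := - x.

Lemma char2_ring_theory : ring_theory (0 : R) 1 char2_add char2_mul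
  (fun x y => char2_add x (char2_opp y)) char2_opp eq.
Proof.
split; rewrite /char2_add /char2_mul /char2_opp;
  [exact: add0r|exact: addrC|exact: addrA|exact: mul1r|exact: mulrC
  |exact: mulrA|exact: mulrDl|by []|exact: subrr].
Qed.

Lemma char2_bool_morph : ring_morph (0 : R) 1 char2_add char2_mul
  (fun x y => char2_add x (char2_opp y)) char2_opp eq
  false true xorb andb xorb id Bool.eqb (fun b : bool => b%:R).
Proof.
rewrite /char2_add /char2_mul /char2_opp; split=> //=.
- by case; case; rewrite //= ?addr0 ?add0r.
- by case; case; rewrite //= ?char2_oppr ?addr0 ?add0r.
- by case; case; rewrite /= ?mulr1 ?mulr0.
- by case; rewrite /= ?char2_oppr ?oppr0.
- by case; case.
Qed.

Add Ring char2_ring : char2_ring_theory (morphism char2_bool_morph).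

Lemma cobar_identity (rho tau xi t0 t1 xi' t0' t1' : R) :
  (tau + rho * t0) ^+ 2 * t1' + (tau + rho * t0) ^+ 2 * xi' * t0'
  + (tau ^+ 2 * (t1 + xi * t0' + t1') + tau ^+ 2 * (xi + xi') * (t0 + t0'))
  + (tau ^+ 2 * t1 + tau ^+ 2 * xi * t0)
  - ((tau ^+ 2 * t0 + tau * rho * t0 ^+ 2 + rho ^+ 2 * t0 ^+ 3) * xi'
     - rho * (t0 ^+ 2 * t0' ^+ 2))
  = (rho * t0' ^+ 2 + rho * tau * xi' + rho ^+ 2 * t1' + rho ^+ 2 * xi' * t0'
       + rho ^+ 2 * t0 * xi') * (t0 ^+ 2 - rho * t1 - rho * t0 * xi - tau * xi)
    + (rho * tau * xi + rho ^+ 2 * t1 + rho ^+ 2 * xi * t0)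
      * (t0' ^+ 2 - rho * t1' - rho * t0' * xi' - (tau + rho * t0) * xi').
Proof.
have oppE (y : R) : - y = char2_opp y by [].
have addE (y z : R) : y + z = char2_add y z by [].
have mulE (y z : R) : y * z = char2_mul y z by [].
rewrite !expr2 !exprS expr0 !oppE !addE !mulE.
match goal with |- ?u = ?v => change (@eq R u v) end.
ring.
Qed.

End Char2Ring.

Section IdealMembership.
Variables (R : comNzRingType) (gens : seq R).

Lemma in_ideal_add x y : in_ideal gens x -> in_ideal gens y -> in_ideal gens (x + y).
Proof.
move=> [qs [size_qs ->]] [rs [size_rs ->]].
have size_qrs : size (zip qs rs) = size gens by rewrite size_zip size_qs size_rs minnn.
exists [seq q.1 + q.2 | q <- zip qs rs]; split; first by rewrite size_map.
rewrite -big_split; apply: eq_bigr => i _ /=.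
by rewrite (nth_map 0) ?size_qrs // nth_zip ?mulrDl // size_qs size_rs.
Qed.

Lemma in_ideal_nth u i : (i < size gens)%N -> in_ideal gens (u * gens`_i).
Proof.
move=> lt_i; exists [seq if k == i then u else 0 | k <- iota 0 (size gens)].
split; first by rewrite size_map size_iota.
rewrite (bigD1 (Ordinal lt_i)) //= big1 => [|k ne_ki];
  rewrite (nth_map 0%N) ?size_iota // nth_iota // add0n.
  by rewrite eqxx addr0.
by rewrite -val_eqE /= in ne_ki; rewrite (negbTE ne_ki) mul0r.
Qed.

End IdealMembership.

Lemma eqGG_of_rels (x y u v : P8) :
  x - y = u * (tau08 ^+ 2 - rho8 * tau18 - rho8 * tau08 * xi8 - tau8 * xi8)
        + v * (tau08' ^+ 2 - rho8 * tau18' - rho8 * tau08' * xi8'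
               - (tau8 + rho8 * tau08) * xi8') ->
  eqGG x y.
Proof.
rewrite /eqGG => ->; apply: in_ideal_add.
  exact: (@in_ideal_nth _ _ _ 2).
exact: (@in_ideal_nth _ _ _ 5).
Qed.

Fixpoint iter_poly (R : nzSemiRingType) (n : nat) : nzSemiRingType :=
  if n is n'.+1 then {poly iter_poly R n'} else R.

Fixpoint iter_polyC (R : nzSemiRingType) (n : nat) : {rmorphism R -> iter_poly R n} :=
  if n is n'.+1 then polyC \o iter_polyC R n' else idfun.

Definition poly_nzSemiRing (S : nzSemiRingType) : nzSemiRingType := {poly S}.

Definition iter_poly_step R n (S S' : nzSemiRingType) :
  iter_poly R n = S -> poly_nzSemiRing S = S' -> iter_poly R n.+1 = S' :=
  fun E e => eq_trans (congr1 poly_nzSemiRing E) e.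

(* [cst8] is elaborated with the structure instances of [iter_poly K 8],
   while P8 carries the ones declared in Defs.  Unifying the two towers in one
   go is prohibitively slow, so they are identified one floor at a time by a
   transparent equality, along which [iter_polyC K 8] is transported. *)
Definition iter_poly8E : iter_poly K 8 = P8 :> nzSemiRingType :=
  iter_poly_step (iter_poly_step (iter_poly_step (iter_poly_step
  (iter_poly_step (iter_poly_step (iter_poly_step
    (erefl : iter_poly K 1 = P1 :> nzSemiRingType)
    (erefl : poly_nzSemiRing P1 = P2)) (erefl : poly_nzSemiRing P2 = P3))
    (erefl : poly_nzSemiRing P3 = P4)) (erefl : poly_nzSemiRing P4 = P5))
    (erefl : poly_nzSemiRing P5 = P6)) (erefl : poly_nzSemiRing P6 = P7))
    (erefl : poly_nzSemiRing P7 = P8).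

Definition cst8_rmorphism : {rmorphism K -> P8} :=
  eq_rect _ (fun S : nzSemiRingType => {rmorphism K -> S}) (iter_polyC K 8) _ iter_poly8E.

Lemma cst8_rmorphismE k : cst8_rmorphism k = cst8 k.
Proof. by []. Qed.

Lemma cst8_is_nmod_morphism : nmod_morphism cst8.
Proof. by split=> [|a b]; rewrite -!cst8_rmorphismE ?rmorph0 ?rmorphD. Qed.

Lemma cst8_is_monoid_morphism : monoid_morphism cst8.
Proof. by split=> [|a b]; rewrite -!cst8_rmorphismE ?rmorph1 ?rmorphM. Qed.

HB.instance Definition _ := GRing.isNmodMorphism.Build K P8 cst8 cst8_is_nmod_morphism.
HB.instance Definition _ :=
  GRing.isMonoidMorphism.Build K P8 cst8 cst8_is_monoid_morphism.

Lemma P8_char2 : 2%:R = 0 :> P8.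
Proof.
have K_char2 : 2%:R = 0 :> K by apply/eqP.
by rewrite -(rmorph_nat cst8) K_char2 rmorph0.
Qed.

Definition c_rep : P5 := tau5 ^+ 2 * tau15 + tau5 ^+ 2 * xi5 * tau05.

Section Evaluation.
Variables x1 x2 x3 x4 x5 : P8.

Definition ev1 : P1 -> P8 := horner_morph (fun k => mulrC x1 (cst8 k)).
HB.instance Definition _ := GRing.RMorphism.on ev1.
Definition ev2 : P2 -> P8 := horner_morph (fun p => mulrC x2 (ev1 p)).
HB.instance Definition _ := GRing.RMorphism.on ev2.
Definition ev3 : P3 -> P8 := horner_morph (fun p => mulrC x3 (ev2 p)).
HB.instance Definition _ := GRing.RMorphism.on ev3.
Definition ev4 : P4 -> P8 := horner_morph (fun p => mulrC x4 (ev3 p)).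
HB.instance Definition _ := GRing.RMorphism.on ev4.

Lemma ev5E : ev5 x1 x2 x3 x4 x5 = horner_morph (fun p => mulrC x5 (ev4 p)).
Proof. by []. Qed.

HB.instance Definition _ :=
  GRing.RMorphism.copy (ev5 x1 x2 x3 x4 x5) (horner_morph (fun p => mulrC x5 (ev4 p))).

Lemma ev5_rho : ev5 x1 x2 x3 x4 x5 rho5 = x1.
Proof.
by rewrite ev5E /ev4 /ev3 /ev2 /ev1; do 4 rewrite horner_morphC /=; rewrite horner_morphX.
Qed.

Lemma ev5_tau : ev5 x1 x2 x3 x4 x5 tau5 = x2.
Proof.
by rewrite ev5E /ev4 /ev3 /ev2; do 3 rewrite horner_morphC /=; rewrite horner_morphX.
Qed.

Lemma ev5_xi : ev5 x1 x2 x3 x4 x5 xi5 = x3.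
Proof. by rewrite ev5E /ev4 /ev3; do 2 rewrite horner_morphC /=; rewrite horner_morphX. Qed.

Lemma ev5_tau0 : ev5 x1 x2 x3 x4 x5 tau05 = x4.
Proof. by rewrite ev5E /ev4 horner_morphC /= horner_morphX. Qed.

Lemma ev5_tau1 : ev5 x1 x2 x3 x4 x5 tau15 = x5.
Proof. by rewrite ev5E horner_morphX. Qed.

(* The generators are generalized before rewriting with the morphism laws:
   failed matches against the concrete generators would unfold their nested
   polynomial structures. *)
Lemma ev5_c_rep : ev5 x1 x2 x3 x4 x5 c_rep = x2 ^+ 2 * x5 + x2 ^+ 2 * x3 * x4.
Proof.
move: ev5_tau ev5_xi ev5_tau0 ev5_tau1; rewrite /c_rep.
move: tau5 xi5 tau05 tau15 => t x a b ev_t ev_x ev_a ev_b.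
by rewrite !(rmorphD, rmorphM, rmorphXn) /= ev_t ev_x ev_a ev_b.
Qed.

Lemma ev5_a_rep :
  ev5 x1 x2 x3 x4 x5 a_rep = x2 ^+ 2 * x4 + x2 * x1 * x4 ^+ 2 + x1 ^+ 2 * x4 ^+ 3.
Proof.
move: ev5_rho ev5_tau ev5_tau0; rewrite /a_rep.
move: rho5 tau5 tau05 => r t a ev_r ev_t ev_a.
by rewrite !(rmorphD, rmorphM, rmorphXn) /= ev_r ev_t ev_a.
Qed.

Lemma ev5_eta0_rep : ev5 x1 x2 x3 x4 x5 eta0_rep = x4 ^+ 2.
Proof. by rewrite rmorphXn /= ev5_tau0. Qed.

End Evaluation.

Theorem mainTheorem12 :
  exists c : P5,
    eqGG (cobar_d1 c)
         (cobar_mul11 a_rep eta_rep - rho8 * cobar_mul11 eta0_rep eta0_rep).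
Proof.
exists c_rep; rewrite /cobar_d1 /cobar_mul11 /iotaL /iotaR /Delta.
rewrite !ev5_c_rep ev5_a_rep !ev5_eta0_rep ev5_xi.
apply: eqGG_of_rels.
exact: (cobar_identity P8_char2 rho8 tau8 xi8 tau08 tau18 xi8' tau08' tau18').
Qed.
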